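(* Let $X\subset\mathbb{R}^n$, $U\subset\mathbb{R}^m$ be compact, $f:X\times U\to\mathbb{R}^n$ Lipschitz continuous, and consider $\dot{\mathbf{x}}(t)=f(\mathbf{x}(t),\mathbf{u}(t))$. Let $\Phi=\bigwedge_{i=1}^N\phi_i$ be an STL specification of the fragment described in the context over $[0,T]$ with $\Phi_a(t)\neq\emptyset$ for all $t\in[0,T]$, let $W=X\times[0,T]$, and let $\mathcal{C}^\Phi(t)\subset\mathcal{S}^\Phi(t)$ be a time-varying set. Let $\mathcal{B}:W\to\mathbb{R}$ be continuously differentiable, $g:W\to U$ continuous, $\alpha$ an extended class $\mathcal{K}$ function, $\lambda>0$, and define $q_1(x,t)=-\mathcal{B}(x,t)\mathbb{1}_{(x,t)\in\mathcal{C}^\Phi(t)}$, $q_2(x,t)=(\mathcal{B}(x,t)+\lambda)\mathbb{1}_{(x,t)\in W\setminus\mathcal{C}^\Phi(t)}$, $q_3(x,t)=-\frac{\partial\mathcal{B}}{\partial x}(x,t)f(x,g(x,t))-\frac{\partial\mathcal{B}}{\partial t}(x,t)-\alpha(\mathcal{B}(x,t))$. If there is $\eta\leq0$ such that $\max_{k\in\{1,2,3\}}q_k(x,t)\leq\eta$ for all $(x,t)\in W$, then the trajectory $\mathbf{x}_{x_0,\mathbf{u}}$ starting from $x_0$ with $(x_0,0)\in\mathcal{C}^\Phi(0)$ under $\mathbf{u}(t)=g(\mathbf{x}(t),t)$ satisfies $\mathbf{x}_{x_0,\mathbf{u}}\models\Phi$.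
   Context: STL fragment: a predicate $\mu$ is given by $h:X\to\mathbb{R}$, true at $x$ iff $h(x)\geq0$. Non-temporal formulas $\varphi ::= \mathsf{true}\mid\mu\mid\lnot\varphi\mid\varphi_1\wedge\varphi_2\mid\varphi_1\vee\varphi_2$, with pointwise robustness $\rho^\mu(x)=h(x)$, $\rho^{\lnot\varphi}=-\rho^\varphi$, $\rho^{\wedge}=\min$, $\rho^{\vee}=\max$. Each $\phi_i$ is $\square_{[a_i,b_i]}\varphi_i$ or $\lozenge_{[a_i,b_i]}\varphi_i$, $[a_i,b_i]\subseteq[0,T]$. For a signal $\mathbf{x}$: $\rho^{\square_{[a,b]}\varphi}(\mathbf{x})=\min_{t'\in[a,b]}\rho^\varphi(\mathbf{x}(t'))$, $\rho^{\lozenge_{[a,b]}\varphi}(\mathbf{x})=\max_{t'\in[a,b]}\rho^\varphi(\mathbf{x}(t'))$, $\rho^\Phi=\min_i\rho^{\phi_i}$, and $\mathbf{x}\models\Phi$ iff $\rho^\Phi(\mathbf{x})\geq0$. Intervals: $I_i=[a_i,b_i]$ for always formulas and $I_i=[t_i^*,t_i^*+\delta]$ with fixed $a_i\leq t_i^*<t_i^*+\delta\leq b_i$, $\delta>0$, for eventually formulas; $\Phi_a(t)=\{\varphi_i\mid t\in I_i\}$; $\mathcal{S}^\Phi(t)=\{(x,t)\in W\mid\min_{\varphi_i\in\Phi_a(t)}\rho^{\varphi_i}(x)\geq0\}$. $\mathbb{1}$ denotes the indicator function. An extended class $\mathcal{K}$ function is continuous, strictly increasing, with $\alpha(0)=0$.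 *)

From HB Require Import structures.
From mathcomp Require Import all_boot all_order all_algebra.
From mathcomp Require Import all_classical all_reals all_analysis.
Set Implicit Arguments. Unset Strict Implicit. Unset Printing Implicit Defensive.
Import Order.TTheory GRing.Theory Num.Theory.
Import numFieldNormedType.Exports.
Local Open Scope classical_set_scope.
Local Open Scope ring_scope.

Inductive stl_formula (R : realType) (n : nat) : Type :=
| STrue
| SPred of ('rV[R]_n -> R)             (* predicate mu given by h, true iff h x >= 0 *)
| SNot of stl_formula R n
| SAnd of stl_formula R n & stl_formula R n
| SOr  of stl_formula R n & stl_formula R n.
Arguments STrue {R n}.

Fixpoint rho (R : realType) (n : nat) (phi : stl_formula R n) (x : 'rV[R]_n)
  : \bar R :=
  match phi with
  | STrue => +oo%E
  | SPred h => (h x)%:E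
  | SNot p => (- rho p x)%E
  | SAnd p q => Order.min (rho p x) (rho q x)
  | SOr p q => Order.max (rho p x) (rho q x)
  end.

(* Robustness of phi_i = always_[a_i,b_i] phi_i  (if always i)
                       or eventually_[a_i,b_i] phi_i (otherwise), for a signal x.
   min/max over [a,b] are taken as inf/sup (they coincide when attained). *)
Definition rho_temporal (R : realType) (n N : nat) (always : 'I_N -> bool)
  (a b : 'I_N -> R) (phi : 'I_N -> stl_formula R n) (i : 'I_N)
  (x : R -> 'rV[R]_n) : \bar R :=
  let S := [set rho (phi i) (x t) | t in [set t | t \in `[a i, b i]%R]] in
  if always i then ereal_inf S else ereal_sup S.

Definition rho_spec (R : realType) (n N : nat) (always : 'I_N -> bool)
  (a b : 'I_N -> R) (phi : 'I_N -> stl_formula R n) (x : R -> 'rV[R]_n)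
  : \bar R :=
  \big[Order.min/+oo%E]_(i < N) rho_temporal always a b phi i x.

Definition stl_sat (R : realType) (n N : nat) (always : 'I_N -> bool)
  (a b : 'I_N -> R) (phi : 'I_N -> stl_formula R n) (x : R -> 'rV[R]_n) : Prop :=
  (0 <= rho_spec always a b phi x)%E.

Definition act_itv (R : realType) (N : nat) (always : 'I_N -> bool)
  (a b tstar : 'I_N -> R) (delta : R) (i : 'I_N) : interval R :=
  if always i then `[a i, b i] else `[tstar i, tstar i + delta].

Definition Wset (R : realType) (n : nat) (X : set 'rV[R]_n) (T : R)
  : set ('rV[R]_n * R) :=
  X `*` [set t | t \in `[0, T]].

Definition Sset (R : realType) (n N : nat) (X : set 'rV[R]_n) (T : R)
  (always : 'I_N -> bool) (a b tstar : 'I_N -> R) (delta : R)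
  (phi : 'I_N -> stl_formula R n) : set ('rV[R]_n * R) :=
  [set p | Wset X T p /\
     (0 <= \big[Order.min/+oo%E]_(i < N | p.2 \in act_itv always a b tstar delta i)
             rho (phi i) p.1)%E].

From HB Require Import structures.
From mathcomp Require Import all_boot all_order all_algebra.
From mathcomp Require Import all_classical all_reals all_analysis.
From mathcomp Require Import lra.
Set Implicit Arguments. Unset Strict Implicit. Unset Printing Implicit Defensive.
Import Order.TTheory GRing.Theory Num.Theory.
Import numFieldNormedType.Exports.
Local Open Scope classical_set_scope.
Local Open Scope ring_scope.

(* By q1 <= eta <= 0 and q2 <= eta <= 0, the barrier satisfies B >= 0 on C and
   B <= -lambda on W \ C.  Along the closed-loop trajectory, t |-> B (x t, t) is
   continuous and starts nonnegative, so by the intermediate value theorem it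
   never enters the gap (-lambda, 0) and hence never leaves C, which lies in
   S^Phi.  The active
   subformulas are therefore robustly satisfied at every time, which gives
   each always-formula on [a_i, b_i] and each eventually-formula at t*_i. *)

Lemma continuous_gap_ge0 (R : realType) (h : R -> R) (c d lambda : R) :
  0 < lambda -> {within `[c, d], continuous h} -> 0 <= h c ->
  (forall s, s \in `[c, d] -> 0 <= h s \/ h s <= - lambda) ->
  forall s, s \in `[c, d] -> 0 <= h s.
Proof.
move=> lambda_gt0 hc hc_ge0 gap s s_cd; case: (leP 0 (h s)) => // hs_lt0.
have /andP[cs sd] : c <= s <= d by move: s_cd; rewrite in_itv.
have hs_le : h s <= - lambda.
  by case: (gap s s_cd) => // hs_ge0; lra.
have [r r_cs hr] : exists2 r, r \in `[c, s] & h r = - (lambda / 2).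
  apply: IVT => //.
    apply: continuous_subspaceW hc => u /=; rewrite !in_itv /= => /andP[-> us].
    exact: le_trans us sd.
  rewrite ge_min le_max; apply/andP; split; apply/orP; [right | left]; lra.
have r_cd : r \in `[c, d].
  by move: r_cs; rewrite !in_itv /= => /andP[-> rs]; exact: le_trans rs sd.
by case: (gap r r_cd); rewrite hr => ?; lra.
Qed.

Lemma barrier_sign (R : realDomainType) (P : Type) (W C : set P) (B : P -> R)
    (lambda eta r : R) (p : P) :
  eta <= 0 -> W p ->
  Num.max (- B p * \1_C p) (Num.max ((B p + lambda) * \1_(W `\` C) p) r) <= eta ->
  (C p -> 0 <= B p) /\ (~ C p -> B p <= - lambda).
Proof.
move=> eta_le0 Wp; rewrite !ge_max => /and3P[q1 q2 _].
split=> Cp.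
  move: q1; rewrite indicE mem_set // mulr1 => q1.
  by rewrite -oppr_le0; exact: le_trans q1 eta_le0.
move: q2; rewrite indicE mem_set // mulr1 => q2.
by rewrite -subr_le0 opprK; exact: le_trans q2 eta_le0.
Qed.

Lemma continuous_within_graph_comp (T V Y : topologicalType) (A : set T)
    (x : T -> V) (F : V * T -> Y) :
  {within A, continuous x} -> (forall t, A t -> {for (x t, t), continuous F}) ->
  {within A, continuous (fun t => F (x t, t))}.
Proof.
move=> xc Fc; apply/subspace_continuousP => t At.
have graph_cvg : (fun s => (x s, s)) @ within A (nbhs t) --> (x t, t).
  apply: cvg_pair; last exact: cvg_within.
  by move/subspace_continuousP: xc; apply.
exact: cvg_comp graph_cvg (Fc t At).
Qed.

Lemma barrier_forward_invariant (R : realType) (V : Type) (W C : set (V * R))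
    (B : V * R -> R) (x : R -> V) (t0 t1 lambda : R) :
  0 < lambda ->
  (forall p, W p -> (C p -> 0 <= B p) /\ (~ C p -> B p <= - lambda)) ->
  {within `[t0, t1], continuous (fun t => B (x t, t))} ->
  (forall t, t \in `[t0, t1] -> W (x t, t)) ->
  C (x t0, t0) ->
  forall t, t \in `[t0, t1] -> C (x t, t).
Proof.
move=> lambda_gt0 sign Bc Wx Cx0 t tin.
have [CB nCB] := sign _ (Wx t tin).
have B_ge0 : 0 <= B (x t, t).
  apply: (@continuous_gap_ge0 _ (fun s => B (x s, s)) _ _ _ lambda_gt0 Bc _ _ t tin).
    have t0in : t0 \in `[t0, t1].
      by move: tin; rewrite !in_itv /= lexx => /andP[t0t tt1]; exact: le_trans tt1.
    exact: (sign _ (Wx _ t0in)).1.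
  move=> s sin; have [CBs nCBs] := sign _ (Wx s sin).
  by have [/CBs|/nCBs] := pselect (C (x s, s)); [left | right].
apply: contrapT => /nCB; lra.
Qed.

Section ActiveRobustness.
Variables (R : realType) (n N : nat) (always : 'I_N -> bool).
Variables (a b tstar : 'I_N -> R) (delta T : R) (phi : 'I_N -> stl_formula R n).

Let I := act_itv always a b tstar delta.

Lemma Sset_rho_ge0 (X : set 'rV[R]_n) (y : 'rV[R]_n) (t : R) (i : 'I_N) :
  Sset X T always a b tstar delta phi (y, t) -> t \in I i ->
  (0 <= rho (phi i) y)%E.
Proof.
by move=> [_ /=] + ti; rewrite (bigD1 i) //= le_min => /andP[].
Qed.

Variable x : R -> 'rV[R]_n.
Hypothesis a_ge0 : forall i, 0 <= a i.
Hypothesis b_leT : forall i, b i <= T.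
Hypothesis delta_ge0 : 0 <= delta.
Hypothesis tstar_window :
  forall i, ~~ always i -> a i <= tstar i /\ tstar i + delta <= b i.
Hypothesis active_robust :
  forall t i, 0 <= t <= T -> t \in I i -> (0 <= rho (phi i) (x t))%E.

Lemma rho_temporal_ge0 (i : 'I_N) : (0 <= rho_temporal always a b phi i x)%E.
Proof.
rewrite /rho_temporal; case: ifP => always_i.
  apply: le_ereal_inf_tmp => _ [t /= + <-]; rewrite in_itv /= => /andP[a_t t_b].
  apply: active_robust; first by rewrite (le_trans (a_ge0 i) a_t) (le_trans t_b).
  by rewrite /I /act_itv always_i in_itv /= a_t t_b.
have [a_ts ts_b] := tstar_window (negbT always_i).
have tdt : tstar i <= tstar i + delta by rewrite lerDl.
apply: le_trans (ereal_sup_ubound _); last first.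
  by exists (tstar i); rewrite //= in_itv /= a_ts (le_trans tdt).
apply: active_robust.
  by rewrite (le_trans (a_ge0 i) a_ts) (le_trans tdt) // (le_trans ts_b).
by rewrite /I /act_itv always_i in_itv /= lexx.
Qed.

Lemma stl_sat_of_active_robust : stl_sat always a b phi x.
Proof.
rewrite /stl_sat /rho_spec; apply: (big_ind (fun e => 0 <= e)%E) => //.
  by move=> e1 e2 e1_ge0 e2_ge0; rewrite le_min e1_ge0 e2_ge0.
by move=> i _; exact: rho_temporal_ge0.
Qed.

End ActiveRobustness.

Theorem lemma1 (R : realType) (n m : nat)
  (X : set 'rV[R]_n) (U : set 'rV[R]_m)
  (f : 'rV[R]_n * 'rV[R]_m -> 'rV[R]_n)
  (T : R) (N : nat) (always : 'I_N -> bool) (a b tstar : 'I_N -> R) (delta : R)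
  (phi : 'I_N -> stl_formula R n)
  (C : set ('rV[R]_n * R))
  (B : 'rV[R]_n * R -> R) (g : 'rV[R]_n * R -> 'rV[R]_m)
  (alpha : R -> R) (lambda eta : R)
  (x0 : 'rV[R]_n) (x : R -> 'rV[R]_n) :
  compact X -> compact U ->
  (exists L : R, forall p q, (X `*` U) p -> (X `*` U) q ->
      `|f p - f q| <= L * `|p - q|) ->
  (forall i, 0 <= a i /\ a i <= b i /\ b i <= T) ->
  0 < delta ->
  (forall i, ~~ always i -> a i <= tstar i /\ tstar i + delta <= b i) ->
  (forall t, 0 <= t <= T ->
      exists i, t \in act_itv always a b tstar delta i) ->
  C `<=` Sset X T always a b tstar delta phi ->
  (forall p, Wset X T p -> differentiable B p) ->
  (forall v, {within Wset X T, continuous (fun p => 'd B p v)}) ->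
  {within Wset X T, continuous g} ->
  (forall p, Wset X T p -> U (g p)) ->
  continuous alpha -> {homo alpha : s t / s < t} -> alpha 0 = 0 ->
  0 < lambda ->
  eta <= 0 ->
  (forall p, Wset X T p ->
     let q1 := - B p * \1_C p in
     let q2 := (B p + lambda) * \1_(Wset X T `\` C) p in
     let q3 := - 'd B p (f (p.1, g p), 0) - 'd B p (0, 1) - alpha (B p) in
     Num.max q1 (Num.max q2 q3) <= eta) ->
  C (x0, 0) ->
  x 0 = x0 ->
  {within [set t | t \in `[0, T]], continuous x} ->
  (forall t, 0 < t < T -> is_derive t 1 x (f (x t, g (x t, t)))) ->
  (forall t, 0 <= t <= T -> X (x t)) ->
  stl_sat always a b phi x.
Proof.
move=> _ _ _ abT delta_gt0 tstar_win _ C_S B_diff _ _ _ _ _ _ lambda_gt0 eta_le0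
  q_le_eta C_x0 x_0 x_cont _ x_X.
have W_x t : t \in `[0, T] -> Wset X T (x t, t).
  by move=> tin; split=> //; apply: x_X; move: tin; rewrite in_itv.
have sign p : Wset X T p -> (C p -> 0 <= B p) /\ (~ C p -> B p <= - lambda).
  by move=> Wp; exact: barrier_sign eta_le0 Wp (q_le_eta p Wp).
have B_x_cont : {within `[0, T], continuous (fun t => B (x t, t))}.
  apply: continuous_within_graph_comp x_cont _ => t tin.
  exact/differentiable_continuous/B_diff/W_x.
have C_x := barrier_forward_invariant lambda_gt0 sign B_x_cont W_x.
rewrite x_0 in C_x; have {}C_x := C_x C_x0.
apply: (stl_sat_of_active_robust (T := T)) (ltW delta_gt0) tstar_win _ => [i|i|t i tin ti].
- by have [] := abT i.
- by have [_ []] := abT i.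
- have Cxt : C (x t, t) by apply: C_x; rewrite in_itv.
  exact: Sset_rho_ge0 (C_S _ Cxt) ti.
Qed.
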